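(* Let $\mathcal{S}$ be a finite set with $|\mathcal{S}| = S$, let $d_\pi$ be a categorical distribution on $\mathcal{S}$ (the state distribution induced by a policy $\pi$), and let $d_n$ be the empirical distribution obtained from $n$ independent samples drawn from $d_\pi$, i.e. $d_n(s) = \frac{1}{n}\sum_{j=1}^n \mathbf{1}(X_j = s)$ with $X_1,\dots,X_n$ i.i.d. with law $d_\pi$. Then, for any $\epsilon > 0$, $$\mathbb{P}\left( \mathcal H(d_\pi)-\mathcal H(d_n)>\epsilon \right) \leq 2S \exp\left(-n\frac{\epsilon^2\,\mathrm{Var}(d_\pi)}{2S^3\,\mathcal H^2(d_\pi)}\right),$$ where $\mathcal H(p) = -\sum_{s\in\mathcal S} p(s)\log p(s)$ is the Shannon entropy and $\mathrm{Var}(d_\pi) = \sum_{s\in\mathcal S} d_\pi(s)(1-d_\pi(s))$. Furthermore, to ensure this concentration with confidence $1-\delta$ (i.e. $\mathbb{P}( \mathcal H(d_\pi)-\mathcal H(d_n)>\epsilon ) \le \delta$), it suffices that the number of samples satisfies $$n \geq \frac{2S^3 \mathcal{H}^2(d_\pi)}{\epsilon^2 \mathrm{Var}(d_\pi)} \cdot \ln\frac{2S}{\delta}.$$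
   Context: $\mathcal H$ denotes Shannon entropy of a distribution on the finite set $\mathcal S$; $\mathrm{Var}(d_\pi)=\sum_{s} d_\pi(s)(1-d_\pi(s))$ is the (total) variance associated with the categorical distribution $d_\pi$. The samples are assumed independent. *)

From HB Require Import structures.
From mathcomp Require Import all_boot all_order all_algebra.
From mathcomp Require Import all_classical all_reals all_analysis.
Set Implicit Arguments. Unset Strict Implicit. Unset Printing Implicit Defensive.
Import Order.TTheory GRing.Theory Num.Theory.
Local Open Scope ring_scope.

(* Shannon entropy (natural log); convention 0 log 0 = 0 holds since ln 0 = 0. *)
Definition entropy (R : realType) (T : finType) (p : T -> R) : R :=
  - \sum_(s : T) p s * ln (p s).

Definition cat_var (R : realType) (T : finType) (p : T -> R) : R :=
  \sum_(s : T) p s * (1 - p s).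

Definition empirical (R : realType) (T : finType) (n : nat)
  (x : {ffun 'I_n -> T}) : T -> R :=
  fun s => (#|[set j | x j == s]|)%:R / n%:R.

Definition iid_prob (R : realType) (T : finType) (d : T -> R) (n : nat)
  (E : pred {ffun 'I_n -> T}) : R :=
  \sum_(x : {ffun 'I_n -> T} | E x) \prod_(j < n) d (x j).

From HB Require Import structures.
From mathcomp Require Import all_boot all_order all_algebra.
From mathcomp Require Import all_classical all_reals all_analysis.
From mathcomp Require Import ring lra.
Import Order.TTheory GRing.Theory Num.Theory.
Import numFieldNormedType.Exports.
Local Open Scope ring_scope.

(* Fix the rate c = eps^2 Var(d) / (2 S^3 H(d)^2), where S = #|T|.  For every state
   s with d s > 0, a multiplicative Chernoff bound shows that the empirical frequency
   of s drops below d s - sqrt (2 c d s) with probability at most exp (- n c); a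
   union bound over the states costs the factor S.  Outside these events, comparing
   x ln x at d s and at the empirical frequency bounds the entropy gap by
   sum_s (sqrt (2 c d s) (- ln (d s)) + 2 c), which is at most eps because
   sqrt Var * sum_s sqrt (d s) (- ln (d s)) + Var <= S sqrt S H.  The latter follows
   by splitting off a most likely state and using the logarithmic-mean inequality
   sqrt (a b) (ln a - ln b) <= a - b. *)

Section elementary_inequalities.
Context {R : realType}.
Local Open Scope classical_set_scope.
Implicit Types x u v m p : R.

Lemma expR_ge_taylor2 x : 0 <= x -> 1 + x + x ^+ 2 / 2 <= expR x.
Proof.
move=> x0.
pose f : R -> R := expR - (cst 1 + id + id ^+ 2 * cst 2^-1).
have df (t : R) : is_derive t (1 : R) f (expR t - (1 + t)).
  apply: is_derive_eq.
  by rewrite scaler0 add0r expr1 /GRing.scale /= add0r mulr1 mulrA mulVf ?mul1r.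
have cf : {within `[0, x], continuous f}.
  by apply: derivable_within_continuous => t _; apply: ex_derive; exact: df.
have [c _ fxE] := MVT_segment x0 (fun t _ => df t) cf.
have : 0 <= f x - f 0.
  by rewrite fxE mulr_ge0 ?subr_ge0 ?expR_ge1Dx // subr0.
by rewrite /f !fctE /= expR0 expr0n /=; lra.
Qed.

Lemma expRN_le_taylor2 x : 0 <= x -> expR (- x) <= 1 - x + x ^+ 2 / 2.
Proof.
move=> x0; have x20 : 0 <= x ^+ 2 / 2 by rewrite divr_ge0 ?sqr_ge0.
have q0 : 0 < 1 + x + x ^+ 2 / 2 by lra.
apply: le_trans (_ : _ <= (1 + x + x ^+ 2 / 2)^-1) _.
  by rewrite expRN lef_pV2 ?posrE ?expR_gt0 ?expR_ge_taylor2.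
rewrite -div1r ler_pdivrMr // -subr_ge0.
have -> : (1 - x + x ^+ 2 / 2) * (1 + x + x ^+ 2 / 2) - 1 = (x ^+ 2 / 2) ^+ 2.
  by field.
exact: sqr_ge0.
Qed.

Lemma ln_le_subr1 x : 0 < x -> ln x <= x - 1.
Proof.
by move=> x0; have := @le_ln1Dx R (x - 1); rewrite addrCA subrr addr0; apply; lra.
Qed.

Lemma lnB_le_divr_sub1 x p : 0 < x -> 0 < p -> ln x - ln p <= x / p - 1.
Proof.
by move=> x0 p0; rewrite -ln_div ?posrE //; apply: ln_le_subr1; exact: divr_gt0.
Qed.

Lemma ln2_le_subrV u : 1 <= u -> 2 * ln u <= u - u^-1.
Proof.
move=> u1.
pose f : R -> R := id - (fun t => (id t)^-1) - 2 *: (@ln R).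
have df (t : R) : 0 < t -> is_derive t (1 : R) f ((1 - t^-1) ^+ 2).
  move=> t0; have ? : is_derive t 1 (fun y => (id y)^-1) (- (id t) ^- 2 *: 1).
    by apply: is_deriveV; rewrite gt_eqF.
  have ? := is_derive1_ln t0.
  apply: is_derive_eq.
  by rewrite /GRing.scale /= mulr1 sqrrB expr1n mul1r exprVn -mulr_natl opprK; lra.
have cf : {within `[1, u], continuous f}.
  apply: derivable_within_continuous => t /[dup] /itvP t1 _.
  by apply: ex_derive; apply: df; rewrite (lt_le_trans ltr01) ?t1.
have df' t : t \in `]1, u[%R -> is_derive t (1 : R) f ((1 - t^-1) ^+ 2).
  by move=> /itvP t1; apply: df; rewrite (lt_trans ltr01) ?t1.
have [c _ fuE] := MVT_segment u1 df' cf.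
have : 0 <= f u - f 1 by rewrite fuE mulr_ge0 ?sqr_ge0 ?subr_ge0.
by rewrite /f !fctE /= ln1 invr1 /GRing.scale /=; lra.
Qed.

Lemma mul_lnB_sqr_le u v : 0 < v -> v <= u ->
  u * v * (ln (u ^+ 2) - ln (v ^+ 2)) <= u ^+ 2 - v ^+ 2.
Proof.
move=> v0 vu; have u0 := lt_le_trans v0 vu.
have := ln2_le_subrV (u / v); rewrite ler_pdivlMr // mul1r => /(_ vu).
rewrite ln_div ?posrE // invf_div => h.
rewrite !(lnXn 2) // -mulrnBl -mulr_natl.
have -> : u ^+ 2 - v ^+ 2 = u * v * (u / v - v / u) by field; rewrite !gt_eqF.
by apply: ler_wpM2l => //; rewrite mulr_ge0 // ltW.
Qed.

Lemma sqrt_mul_lnB_le m p : 0 < p -> p <= m ->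
  Num.sqrt m * Num.sqrt p * (ln m - ln p) <= m - p.
Proof.
move=> p0 pm; have m0 := lt_le_trans p0 pm.
have := mul_lnB_sqr_le (Num.sqrt m) (Num.sqrt p).
rewrite !sqr_sqrtr ?(ltW m0) ?(ltW p0) //.
by apply; rewrite ?sqrtr_gt0 ?ler_sqrt ?(ltW m0).
Qed.

End elementary_inequalities.

Definition nvisits {T : finType} {n : nat} (x : {ffun 'I_n -> T}) (s : T) : nat :=
  #|[set j | x j == s]|.

Section empirical_distribution.
Context {R : realType} {T : finType} {n : nat}.
Implicit Types (x : {ffun 'I_n -> T}) (s : T).

Lemma nvisitsE x s : nvisits x s = (\sum_(j < n) (x j == s))%N.
Proof.
rewrite /nvisits -sum1_card big_mkcond /=.
by apply: eq_bigr => j _; rewrite inE; case: (x j == s).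
Qed.

Lemma sum_nvisits x : (\sum_s nvisits x s)%N = n.
Proof.
under eq_bigr do rewrite nvisitsE.
rewrite exchange_big /= -[n in RHS]card_ord -sum1_card.
apply: eq_bigr => j _; rewrite (bigD1 (x j)) //= eqxx big1 // => s.
by rewrite eq_sym => /negbTE ->.
Qed.

Lemma empiricalE x s : empirical R x s = (nvisits x s)%:R / n%:R.
Proof. by []. Qed.

Lemma empirical_ge0 x s : 0 <= empirical R x s.
Proof. by rewrite divr_ge0. Qed.

Lemma empirical_sum1 x : (0 < n)%N -> \sum_s empirical R x s = 1.
Proof.
move=> n0; rewrite -mulr_suml -natr_sum.
by rewrite [X in X%:R](sum_nvisits x) divff // pnatr_eq0 -lt0n.
Qed.

End empirical_distribution.

Lemma sum_ffun_prod {R : comPzSemiRingType} {T : finType} {n : nat} (f : T -> R) :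
  \sum_(x : {ffun 'I_n -> T}) \prod_(j < n) f (x j) = (\sum_t f t) ^+ n.
Proof. by rewrite -(bigA_distr_bigA (fun _ => f)) prodr_const card_ord. Qed.

Section iid_sampling.
Context {R : realType} {T : finType} {d : T -> R} {n : nat}.
Hypothesis d_ge0 : forall s, 0 <= d s.
Hypothesis d_sum1 : \sum_s d s = 1.

Lemma iid_weight_ge0 (x : {ffun 'I_n -> T}) : 0 <= \prod_(j < n) d (x j).
Proof. exact: prodr_ge0. Qed.

Lemma iid_prob_union_bound {I : finType} {E : pred {ffun 'I_n -> T}}
    (B : I -> pred {ffun 'I_n -> T}) :
  (forall x : {ffun 'I_n -> T},
     \prod_(j < n) d (x j) != 0 -> E x -> exists i, B i x) ->
  iid_prob d E <= \sum_i iid_prob d (B i).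
Proof.
move=> EB; rewrite /iid_prob.
rewrite [leRHS](eq_bigr (fun i => \sum_x if B i x then \prod_(j < n) d (x j) else 0));
  last by move=> i _; rewrite big_mkcond.
rewrite exchange_big /= [leRHS](bigID E) /= -[leLHS]addr0.
have sum_ge0 x : 0 <= \sum_i (if B i x then \prod_(j < n) d (x j) else 0).
  by apply: sumr_ge0 => i _; case: ifP => // _; exact: iid_weight_ge0.
apply: lerD; last by apply: sumr_ge0.
apply: ler_sum => x Ex.
have [->|w_neq0] := eqVneq (\prod_(j < n) d (x j)) 0.
  by apply: sumr_ge0 => i _; case: ifP.
have [i Bi] := EB x w_neq0 Ex.
rewrite (bigD1 i) //= Bi lerDl; apply: sumr_ge0 => k _.
by case: ifP => // _; exact: iid_weight_ge0.
Qed.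

Lemma sum_mgf_visit (s : T) (lam : R) :
  \sum_t d t * expR (- lam * (t == s)%:R) = 1 + d s * (expR (- lam) - 1).
Proof.
rewrite (bigD1 s) //= eqxx mulr1 (eq_bigr d) => [|t /negbTE ->]; last first.
  by rewrite mulr0 expR0 mulr1.
have := d_sum1; rewrite (bigD1 s) //= => d1; lra.
Qed.

Lemma iid_prob_nvisits_le (s : T) (lam k : R) : 0 <= lam ->
  iid_prob d (fun x : {ffun 'I_n -> T} => (nvisits x s)%:R <= k)
  <= expR (lam * k) * (1 + d s * (expR (- lam) - 1)) ^+ n.
Proof.
move=> lam0.
have markov x : (nvisits x s)%:R <= k -> \prod_(j < n) d (x j) <=
    \prod_(j < n) d (x j) * expR (lam * (k - (nvisits x s)%:R)).
  move=> xk; rewrite ler_peMr ?iid_weight_ge0 //.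
  by apply: le_trans (expR_ge1Dx _); rewrite lerDl mulr_ge0 // subr_ge0.
have factor (x : {ffun 'I_n -> T}) :
    \prod_(j < n) d (x j) * expR (lam * (k - (nvisits x s)%:R)) =
    expR (lam * k) * \prod_(j < n) (d (x j) * expR (- lam * (x j == s)%:R)).
  rewrite big_split /= -expR_sum -mulr_sumr nvisitsE natr_sum.
  by rewrite mulrCA -expRD mulrBr mulNr.
apply: le_trans (_ : _ <= \sum_(x : {ffun 'I_n -> T}) \prod_(j < n) d (x j) *
                            expR (lam * (k - (nvisits x s)%:R))) _.
  rewrite [leRHS](bigID (fun x : {ffun 'I_n -> T} => (nvisits x s)%:R <= k)) /=.
  rewrite -[leLHS]addr0; apply: lerD; first by apply: ler_sum => x; exact: markov.
  by apply: sumr_ge0 => x _; rewrite mulr_ge0 ?iid_weight_ge0 ?expR_ge0.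
rewrite (eq_bigr _ (fun x _ => factor x)) -mulr_sumr.
by rewrite (sum_ffun_prod (fun t => d t * expR (- lam * (t == s)%:R))) sum_mgf_visit.
Qed.

Lemma iid_prob_nvisits_lower_tail (s : T) (a : R) : 0 < d s -> 0 <= a ->
  iid_prob d (fun x : {ffun 'I_n -> T} => (nvisits x s)%:R <= n%:R * (d s - a))
  <= expR (- (n%:R * (a ^+ 2 / (2 * d s)))).
Proof.
move=> p_gt0 a0; set p := d s; set lam := a / p.
have lam0 : 0 <= lam by rewrite divr_ge0 // ltW.
apply: le_trans (iid_prob_nvisits_le s lam _ lam0) _.
have base0 : 0 <= 1 + p * (expR (- lam) - 1).
  have : p <= 1 by rewrite -d_sum1 (bigD1 s) //= lerDl sumr_ge0.
  have : 0 <= p * expR (- lam) by rewrite mulr_ge0 ?expR_ge0 // ltW.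
  lra.
apply: le_trans (_ : _ <= expR (lam * (n%:R * (p - a))) *
                          expR (p * (expR (- lam) - 1)) ^+ n) _.
  apply: ler_wpM2l; first exact: expR_ge0.
  by rewrite lerXn2r ?nnegrE ?expR_ge0 ?expR_ge1Dx.
rewrite -expRM_natr -expRD ler_expR.
have -> : - (n%:R * (a ^+ 2 / (2 * p))) =
          lam * (n%:R * (p - a)) + p * (- lam + lam ^+ 2 / 2) * n%:R.
  by rewrite /lam; field; rewrite gt_eqF.
rewrite lerD2l; apply: ler_wpM2r; first exact: ler0n.
apply: ler_wpM2l; first exact: ltW.
by have := expRN_le_taylor2 _ lam0; lra.
Qed.

End iid_sampling.

Lemma xlnx_gap_le {R : realType} (p y a : R) : 0 < p <= 1 -> 0 <= y <= 1 ->
  0 <= a -> p - a <= y ->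
  y * ln y - p * ln p - (y - p) <= a * - ln p + a ^+ 2 / p.
Proof.
move=> /andP[p0 p1] /andP[y0 y1] a0 pay.
have lnp0 : 0 <= - ln p by rewrite oppr_ge0 ln_le0.
have [py|yp] := leP p y.
  have y0' : 0 < y := lt_le_trans p0 py.
  have h1 : (y - p) * ln y <= 0 by rewrite mulr_ge0_le0 ?subr_ge0 ?ln_le0.
  have h2 : p * (ln y - ln p) <= y - p.
    have -> : y - p = p * (y / p - 1) by field; rewrite gt_eqF.
    by apply: ler_wpM2l; [exact: ltW | exact: lnB_le_divr_sub1].
  have : 0 <= a * - ln p + a ^+ 2 / p.
    by apply: addr_ge0; [exact: mulr_ge0 | rewrite divr_ge0 ?sqr_ge0 // ltW].
  have -> : y * ln y - p * ln p - (y - p) =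
            (y - p) * ln y + p * (ln y - ln p) - (y - p) by ring.
  lra.
have h1 : y * (ln y - ln p) <= y * (y / p - 1).
  have [->|yn0] := eqVneq y 0; first by rewrite !mul0r.
  apply: ler_wpM2l => //; apply: lnB_le_divr_sub1 => //.
  by rewrite lt_def yn0 y0.
have h2 : (p - y) ^+ 2 / p <= a ^+ 2 / p.
  apply: ler_wpM2r; first by rewrite invr_ge0; exact: ltW.
  by rewrite lerXn2r ?nnegrE; lra.
have h3 : (p - y) * - ln p <= a * - ln p by apply: ler_wpM2r => //; lra.
have -> : y * ln y - p * ln p - (y - p) =
          y * (y / p - 1) - y + p + (y * (ln y - ln p) - y * (y / p - 1))
          + (p - y) * - ln p by ring.
have -> : y * (y / p - 1) - y + p = (p - y) ^+ 2 / p by field; rewrite gt_eqF.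
lra.
Qed.

Section entropy.
Context {R : realType} {T : finType}.
Implicit Types p y a : T -> R.

Lemma distr_le1 p s : (forall t, 0 <= p t) -> \sum_t p t = 1 -> p s <= 1.
Proof. by move=> p0 <-; rewrite (bigD1 s) //= lerDl sumr_ge0. Qed.

Lemma entropy_ge0 p : (forall s, 0 <= p s) -> \sum_s p s = 1 -> 0 <= entropy p.
Proof.
move=> p0 p1; rewrite /entropy -sumrN; apply: sumr_ge0 => s _.
by rewrite -mulrN mulr_ge0 // oppr_ge0 ln_le0 // distr_le1.
Qed.

Lemma entropy_eq0 p : (forall s, p s = 0 \/ p s = 1) -> entropy p = 0.
Proof.
move=> p01; rewrite /entropy big1 ?oppr0 // => s _.
by case: (p01 s) => ->; rewrite ?mul0r ?ln1 ?mulr0.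
Qed.

(* Terms with [p s = 0] vanish on the right since [ln 0 = 0] and [x / 0 = 0]. *)
Lemma entropy_gap_le p y a :
  (forall s, 0 <= p s) -> \sum_s p s = 1 ->
  (forall s, 0 <= y s) -> \sum_s y s = 1 -> (forall s, 0 <= a s) ->
  (forall s, p s = 0 -> y s = 0) -> (forall s, 0 < p s -> p s - a s <= y s) ->
  entropy p - entropy y <= \sum_s (a s * - ln (p s) + a s ^+ 2 / p s).
Proof.
move=> p0 p1 y0 y1 a0 yp0 pay.
have -> : entropy p - entropy y =
          \sum_s (y s * ln (y s) - p s * ln (p s) - (y s - p s)).
  by rewrite !sumrB y1 p1 subrr subr0 /entropy; ring.
apply: ler_sum => s _; have [ps0|ps_neq0] := eqVneq (p s) 0.
  by rewrite ps0 (yp0 s ps0) ln0 // !(mul0r, mulr0, subrr, oppr0, invr0, addr0).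
have ps_gt0 : 0 < p s by rewrite lt_def ps_neq0 p0.
apply: xlnx_gap_le; rewrite ?ps_gt0 ?y0 ?a0 ?pay //= ?distr_le1 //.
Qed.

End entropy.

(* [r] plays the role of [sqrt 2] and [sigma] that of [sqrt #|T|]. *)
Lemma card_coef_le {R : realType} (r sigma A B : R) :
  1 <= r -> r ^+ 2 = 2 -> r <= sigma -> 0 <= A -> 0 <= B ->
  sigma * A + r * (sigma ^+ 2 / 2 * B + (sigma ^+ 2 - 2) * (A + B)) + (A + B)
  <= sigma ^+ 2 * sigma * (A + B).
Proof.
move=> r1 r2 rs A0 B0; set t := sigma - r.
have t0 : 0 <= t by rewrite subr_ge0.
have coefA : 0 <= (sigma ^+ 2 - 1) * t + (r - 1).
  by rewrite addr_ge0 ?mulr_ge0 ?subr_ge0 // exprn_ege1 // (le_trans r1 rs).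
have coefB : 0 <= r - 1 + 3 / 2 * r * t ^+ 2 + t ^+ 3.
  have : 0 <= r * t ^+ 2 by rewrite mulr_ge0 ?sqr_ge0 // (le_trans ler01 r1).
  have : 0 <= t ^+ 3 by rewrite exprn_ge0.
  lra.
have rE : sigma = r + t by rewrite /t; ring.
rewrite rE in coefA *.
have r3 : r ^+ 3 = 2 * r by rewrite exprS r2 mulrC.
nra.
Qed.

Definition entropy_rate {R : realType} {T : finType} (p : T -> R) (eps : R) : R :=
  eps ^+ 2 * cat_var p / (2 * #|T|%:R ^+ 3 * entropy p ^+ 2).

Section entropy_variance.
Context {R : realType} {T : finType} {p : T -> R}.
Hypotheses (p_ge0 : forall s, 0 <= p s) (p_sum1 : \sum_s p s = 1).
Local Notation S := (#|T|%:R : R).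
Local Notation V := (cat_var p).
Local Notation H := (entropy p).

Lemma entropyE : H = \sum_s p s * - ln (p s).
Proof. by rewrite /entropy -sumrN; apply: eq_bigr => s _; rewrite mulrN. Qed.

Lemma cat_var_le1 : V <= 1.
Proof.
rewrite -p_sum1; apply: ler_sum => s _; apply: ler_piMr => //.
by have := p_ge0 s; lra.
Qed.

Lemma cat_var_le_entropy : V <= H.
Proof.
rewrite entropyE; apply: ler_sum => s _.
have [->|ps_neq0] := eqVneq (p s) 0; first by rewrite !mul0r.
apply: ler_wpM2l => //; have := ln_le_subr1 (p s); rewrite lt_def ps_neq0 p_ge0.
by move=> /(_ isT); lra.
Qed.

Lemma cat_var_gt0 : 0 < H -> 0 < V.
Proof.
have V_ge0 s : true -> 0 <= p s * (1 - p s).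
  by move=> _; rewrite mulr_ge0 // subr_ge0 distr_le1.
move=> H0; rewrite lt_def sumr_ge0 ?andbT //; apply/eqP => V0.
move: H0; rewrite entropy_eq0 ?ltxx // => s.
move/eqP: (psumr_eq0P V_ge0 V0 (i := s) isT).
by rewrite mulf_eq0 subr_eq0 => /orP[/eqP ->|/eqP <-]; [left|right].
Qed.

Lemma card_gt1_of_entropy_gt0 : 0 < H -> (1 < #|T|)%N.
Proof.
move=> H0; rewrite ltnNge; apply/negP => /fintype_le1P T1.
move: H0; rewrite entropy_eq0 ?ltxx // => s; right.
by rewrite -p_sum1 (big_pred1 s) // => t; rewrite /= (T1 s t) eqxx.
Qed.

Section max_state.
Variable s0 : T.
Hypothesis p_max : forall s, p s <= p s0.
Local Notation q := (p s0).
Local Notation m := (1 - p s0).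

Lemma minor_massE : m = \sum_(s | s != s0) p s.
Proof. by rewrite -p_sum1 (bigD1 s0) //=; ring. Qed.

Lemma minor_mass_ge0 : 0 <= m.
Proof. by rewrite minor_massE sumr_ge0. Qed.

Lemma minor_le_minor_mass s : s != s0 -> p s <= m.
Proof. by move=> ss0; rewrite minor_massE (bigD1 s) //= lerDl sumr_ge0. Qed.

Lemma card_mul_max_ge1 : 1 <= S * q.
Proof.
rewrite mulr_natl -sumr_const -{1}p_sum1.
by apply: ler_sum => s _; exact: p_max.
Qed.

Lemma minor_mass_le_cat_var : m <= V.
Proof.
rewrite -[m]mul1r -{1}p_sum1 mulr_suml; apply: ler_sum => s _.
by apply: ler_wpM2l => //; rewrite lerD2l lerN2.
Qed.

Lemma cat_var_le_minor_mass : V <= 2 * m.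
Proof.
have max_part : q * m <= m.
  by apply: ler_piMl; [exact: minor_mass_ge0 | exact: distr_le1].
have minor_part : \sum_(s | s != s0) p s * (1 - p s) <= m.
  rewrite minor_massE; apply: ler_sum => s _; apply: ler_piMr => //.
  by have := p_ge0 s; lra.
by rewrite /cat_var (bigD1 s0) //=; lra.
Qed.

Lemma minor_mass_ln_le : m * - ln m <= \sum_(s | s != s0) p s * - ln (p s).
Proof.
rewrite {1}minor_massE mulr_suml; apply: ler_sum => s ss0.
have [->|ps_neq0] := eqVneq (p s) 0; first by rewrite !mul0r.
have ps_gt0 : 0 < p s by rewrite lt_def ps_neq0 p_ge0.
have m_gt0 : 0 < m := lt_le_trans ps_gt0 (minor_le_minor_mass _ ss0).
apply: ler_wpM2l => //; rewrite lerN2 ler_ln ?posrE //.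
exact: minor_le_minor_mass.
Qed.

Lemma max_term_le : Num.sqrt V * Num.sqrt q * - ln q <= Num.sqrt S * (q * - ln q).
Proof.
have lnq0 : 0 <= - ln q by rewrite oppr_ge0 ln_le0 // distr_le1.
rewrite mulrA; apply: ler_wpM2r => //.
have sqrtV1 : Num.sqrt V <= 1 by rewrite -sqrtr1 ler_sqrt // cat_var_le1.
have sqrt_q : Num.sqrt q <= Num.sqrt S * q.
  rewrite -[Num.sqrt S * q]ger0_norm ?mulr_ge0 ?sqrtr_ge0 //.
  rewrite -sqrtr_sqr ler_sqrt ?sqr_ge0 // exprMn sqr_sqrtr ?ler0n //.
  by have := card_mul_max_ge1; have := p_ge0 s0; nra.
by rewrite -[leRHS]mul1r; apply: ler_pM; rewrite ?sqrtr_ge0.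
Qed.

Lemma minor_term_le s : s != s0 ->
  Num.sqrt V * Num.sqrt (p s) * - ln (p s) <=
  Num.sqrt 2 * ((m + p s) / 2 * - ln m + (m - p s)).
Proof.
move=> ss0; have psm := minor_le_minor_mass _ ss0.
have lnm0 : 0 <= - ln m by rewrite oppr_ge0 ln_le0 //; have := p_ge0 s0; lra.
have [ps0|ps_neq0] := eqVneq (p s) 0.
  rewrite ps0 sqrtr0 mulr0 mul0r mulr_ge0 ?sqrtr_ge0 //.
  by rewrite addr0 subr0 addr_ge0 ?mulr_ge0 ?divr_ge0 ?minor_mass_ge0.
have ps_gt0 : 0 < p s by rewrite lt_def ps_neq0 p_ge0.
have m_gt0 : 0 < m := lt_le_trans ps_gt0 psm.
have sqrtV : Num.sqrt V <= Num.sqrt 2 * Num.sqrt m.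
  by rewrite -sqrtrM // ler_sqrt ?mulr_ge0 ?cat_var_le_minor_mass // ltW.
have amgm : Num.sqrt m * Num.sqrt (p s) <= (m + p s) / 2.
  have := sqr_ge0 (Num.sqrt m - Num.sqrt (p s)).
  by rewrite sqrrB !sqr_sqrtr ?(ltW m_gt0) ?(ltW ps_gt0) //; lra.
have lnps0 : 0 <= - ln (p s) by rewrite oppr_ge0 ln_le0 // distr_le1.
apply: le_trans (_ : _ <= Num.sqrt 2 * (Num.sqrt m * Num.sqrt (p s) * - ln (p s))) _.
  rewrite !mulrA; apply: ler_wpM2r => //.
  exact: ler_wpM2r (sqrtr_ge0 _) _ _ sqrtV.
apply: ler_wpM2l; first exact: sqrtr_ge0.
rewrite (_ : - ln (p s) = - ln m + (ln m - ln (p s))); last by ring.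
rewrite mulrDr; apply: lerD; first exact: ler_wpM2r.
exact: sqrt_mul_lnB_le.
Qed.

Lemma sum_minor_bounds :
  \sum_(s | s != s0) ((m + p s) / 2 * - ln m + (m - p s)) =
  S / 2 * (m * - ln m) + (S - 2) * m.
Proof.
have sum_const (c : R) : \sum_(s | s != s0) c = (S - 1) * c.
  have : \sum_(s : T) c = S * c by rewrite sumr_const mulr_natl.
  by rewrite (bigD1 s0) //=; lra.
rewrite (eq_bigr (fun s => (m * - ln m / 2 + m) + p s * (- ln m / 2 - 1))); last first.
  by move=> s _; ring.
by rewrite big_split /= -mulr_suml -minor_massE sum_const; ring.
Qed.

End max_state.

Lemma sqrt_cat_var_mul_le_entropy : (1 < #|T|)%N ->
  Num.sqrt V * \sum_s Num.sqrt (p s) * - ln (p s) + V <= S * Num.sqrt S * H.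
Proof.
move=> T2; case/card_gt1P: (T2) => x0 _.
case: (@arg_maxP _ R T x0 predT p isT) => s0 _ p_max.
have {}p_max s : p s <= p s0 := p_max s isT.
set A := p s0 * - ln (p s0); set B := \sum_(s | s != s0) p s * - ln (p s).
have A_ge0 : 0 <= A by rewrite mulr_ge0 // oppr_ge0 ln_le0 // distr_le1.
have B_ge0 : 0 <= B.
  by apply: sumr_ge0 => s _; rewrite mulr_ge0 // oppr_ge0 ln_le0 // distr_le1.
have HE : H = A + B by rewrite entropyE (bigD1 s0).
have S2 : 2 <= S by rewrite (ler_nat R 2).
have X_le : Num.sqrt V * \sum_s Num.sqrt (p s) * - ln (p s) <=
    Num.sqrt S * A + Num.sqrt 2 * (S / 2 * B + (S - 2) * (A + B)).
  rewrite mulr_sumr (bigD1 s0) //= mulrA; apply: lerD; first exact: max_term_le.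
  apply: le_trans (_ : _ <= \sum_(s | s != s0) Num.sqrt 2 *
      ((1 - p s0 + p s) / 2 * - ln (1 - p s0) + (1 - p s0 - p s))) _.
    by apply: ler_sum => s ss0; rewrite mulrA; exact: minor_term_le.
  rewrite -mulr_sumr sum_minor_bounds //; apply: ler_wpM2l; first exact: sqrtr_ge0.
  apply: lerD; apply: ler_wpM2l; rewrite ?divr_ge0 ?subr_ge0 ?ler0n //.
    exact: minor_mass_ln_le.
  by rewrite -HE (le_trans (minor_mass_le_cat_var _ p_max)) ?cat_var_le_entropy.
have r1 : 1 <= Num.sqrt 2 :> R by rewrite -[X in X <= _]sqrtr1 ler_sqrt ?ler1n.
have r2 : Num.sqrt 2 ^+ 2 = 2 :> R by rewrite sqr_sqrtr ?ler0n.
have rS : Num.sqrt 2 <= Num.sqrt S by rewrite ler_sqrt // (le_trans _ S2).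
have := card_coef_le _ _ _ _ r1 r2 rS A_ge0 B_ge0; rewrite sqr_sqrtr ?ler0n //.
have := cat_var_le_entropy; rewrite HE; lra.
Qed.

Lemma entropy_rate_gt0 (eps : R) : 0 < eps -> 0 < H -> 0 < entropy_rate p eps.
Proof.
move=> eps0 H0.
have S0 : 0 < S by rewrite ltr0n (ltn_trans _ (card_gt1_of_entropy_gt0 H0)).
by rewrite divr_gt0 ?mulr_gt0 ?exprn_gt0 ?cat_var_gt0.
Qed.

Lemma entropy_gap_budget (eps : R) : 0 < eps < H ->
  \sum_s (Num.sqrt (2 * entropy_rate p eps * p s) * - ln (p s)
          + Num.sqrt (2 * entropy_rate p eps * p s) ^+ 2 / p s) <= eps.
Proof.
case/andP=> eps0 epsH; set c := entropy_rate p eps.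
have H0 := lt_trans eps0 epsH.
have T2 := card_gt1_of_entropy_gt0 H0.
have S1 : 1 <= S by rewrite ler1n ltnW.
have V0 := ltW (cat_var_gt0 H0).
set D := S * Num.sqrt S * H.
have D0 : 0 < D by rewrite !mulr_gt0 ?sqrtr_gt0 //; lra.
set u := eps / D.
have u0 : 0 <= u by rewrite divr_ge0 // ltW.
have cE : 2 * c = (u * Num.sqrt V) ^+ 2.
  rewrite exprMn sqr_sqrtr // /u /D /c /entropy_rate expr_div_n !exprMn.
  rewrite sqr_sqrtr ?ler0n //.
  by field; rewrite -/(entropy p) !gt_eqF // (lt_le_trans ltr01 S1).
have term_le s :
    Num.sqrt (2 * c * p s) * - ln (p s) + Num.sqrt (2 * c * p s) ^+ 2 / p s <=
    u * Num.sqrt V * (Num.sqrt (p s) * - ln (p s)) + (u * Num.sqrt V) ^+ 2.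
  rewrite cE sqrtrM ?sqr_ge0 // sqrtr_sqr ger0_norm; last first.
    exact: mulr_ge0 u0 (sqrtr_ge0 _).
  rewrite mulrA lerD2l exprMn sqr_sqrtr // -mulrA ler_piMr ?sqr_ge0 //.
  by have [->|ps_neq0] := eqVneq (p s) 0; rewrite ?mul0r ?divff.
apply: le_trans (ler_sum _ (fun s _ => term_le s)) _.
rewrite big_split /= -mulr_sumr sumr_const -mulr_natr.
have uS : u * S <= 1.
  rewrite /u mulrAC ler_pdivrMr // mul1r /D -mulrA [leRHS]mulrC.
  rewrite ler_pM2r ?(lt_le_trans ltr01 S1) //.
  apply: le_trans (ltW epsH) _; apply: ler_peMl; first exact: ltW.
  by rewrite -[X in X <= _]sqrtr1 ler_sqrt ?ler0n.
have := ler_wpM2l u0 (sqrt_cat_var_mul_le_entropy T2); rewrite -/D.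
have : u * D = eps by rewrite /u divfK ?gt_eqF.
have := ler_piMr (mulr_ge0 u0 V0) uS.
rewrite exprMn sqr_sqrtr //; lra.
Qed.

End entropy_variance.

Lemma mul_expRN_le {R : realType} (K c x delta : R) :
  0 < K -> 0 < c -> 0 < delta ->
  c^-1 * ln (K / delta) <= x -> K * expR (- (x * c)) <= delta.
Proof.
move=> K0 c0 delta0 xge.
have : ln (K / delta) <= x * c by rewrite -ler_pdivrMr // mulrC.
rewrite -ler_expR lnK ?posrE ?divr_gt0 // ler_pdivrMr // => h.
by rewrite expRN ler_pdivrMr ?expR_gt0 // mulrC.
Qed.

Section entropy_concentration.
Context {R : realType} {T : finType} {d : T -> R} {n : nat}.
Hypotheses (d_ge0 : forall s, 0 <= d s) (d_sum1 : \sum_s d s = 1).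
Hypothesis n_gt0 : (0 < n)%N.
Local Notation S := (#|T|%:R : R).

Lemma empirical_eq0 (x : {ffun 'I_n -> T}) s :
  \prod_(j < n) d (x j) != 0 -> d s = 0 -> empirical R x s = 0.
Proof.
move=> w_neq0 ds0; rewrite empiricalE.
have [->|] := eqVneq (nvisits x s) 0%N; first by rewrite mul0r.
rewrite -lt0n card_gt0 => /set0Pn [j]; rewrite inE => /eqP xjs.
by move: w_neq0; rewrite (bigD1 j) //= xjs ds0 mul0r eqxx.
Qed.

Lemma entropy_gap_event_eq0 (eps : R) : entropy d <= eps ->
  iid_prob d (fun x : {ffun 'I_n -> T} => entropy d - entropy (empirical R x) > eps)
  = 0.
Proof.
move=> Hle; rewrite /iid_prob big_pred0 // => x; apply/negbTE; rewrite -leNgt.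
have := entropy_ge0 (empirical R x) (empirical_ge0 x) (empirical_sum1 x n_gt0).
lra.
Qed.

Lemma iid_prob_entropy_gap_le (eps : R) : 0 < eps < entropy d ->
  iid_prob d (fun x : {ffun 'I_n -> T} => entropy d - entropy (empirical R x) > eps)
  <= S * expR (- (n%:R * entropy_rate d eps)).
Proof.
case/andP=> eps0 epsH; set c := entropy_rate d eps.
have c0 : 0 < c by rewrite (entropy_rate_gt0 d_ge0 d_sum1) // (lt_trans eps0 epsH).
set a := fun s => Num.sqrt (2 * c * d s).
pose B s := [pred x : {ffun 'I_n -> T} |
             (0 < d s) && ((nvisits x s)%:R <= n%:R * (d s - a s))].
apply: le_trans (iid_prob_union_bound d_ge0 B _) _.
  move=> x w_neq0 gap; apply/existsP; move: gap; apply: contraLR => /existsPn noB.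
  rewrite -leNgt; apply: le_trans (entropy_gap_budget d_ge0 d_sum1 eps _); last first.
    by rewrite eps0.
  apply: entropy_gap_le => //.
  - exact: empirical_ge0.
  - exact: empirical_sum1.
  - by move=> s; exact: empirical_eq0.
  move=> s ds_gt0; have := noB s; rewrite inE ds_gt0 /= -ltNge empiricalE => /ltW.
  by rewrite ler_pdivlMr ?ltr0n // mulrC.
apply: le_trans (_ : _ <= \sum_(s : T) expR (- (n%:R * c))) _; last first.
  by rewrite sumr_const [leRHS]mulr_natl.
apply: ler_sum => s _; have [ds0|ds_gt0] := leP (d s) 0.
  rewrite /iid_prob big_pred0 ?expR_ge0 // => x.
  by rewrite inE ltNge ds0.
rewrite /iid_prob (eq_bigl (fun x => (nvisits x s)%:R <= n%:R * (d s - a s)));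
  last by move=> x; rewrite inE ds_gt0.
apply: le_trans
  (iid_prob_nvisits_lower_tail d_ge0 d_sum1 s (a s) ds_gt0 (sqrtr_ge0 _)) _.
have -> : a s ^+ 2 / (2 * d s) = c.
  rewrite /a sqr_sqrtr; first by field; rewrite gt_eqF.
  by rewrite mulr_ge0 ?d_ge0 // mulr_ge0 ?ler0n // ltW.
by [].
Qed.

End entropy_concentration.

Theorem theorem4p1 (R : realType) (T : finType) (d : T -> R)
  (hd0 : forall s, 0 <= d s) (hd1 : \sum_(s : T) d s = 1)
  (n : nat) (hn : (0 < n)%N) (eps : R) (heps : 0 < eps) :
  let P := iid_prob d
             (fun x : {ffun 'I_n -> T} =>
                entropy d - entropy (empirical R x) > eps) in
  let S := (#|T|)%:R : R in
  P <= 2 * S * expR (- (n%:R * (eps ^+ 2 * cat_var d)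
                              / (2 * S ^+ 3 * (entropy d) ^+ 2)))
  /\ (forall delta : R, 0 < delta < 1 ->
        n%:R >= 2 * S ^+ 3 * (entropy d) ^+ 2 / (eps ^+ 2 * cat_var d)
                * ln (2 * S / delta) ->
        P <= delta).
Proof.
move=> P S.
have rateE : n%:R * (eps ^+ 2 * cat_var d) / (2 * S ^+ 3 * entropy d ^+ 2) =
             n%:R * entropy_rate d eps by rewrite /entropy_rate; ring.
have rate_invE : 2 * S ^+ 3 * entropy d ^+ 2 / (eps ^+ 2 * cat_var d) =
                 (entropy_rate d eps)^-1 by rewrite /entropy_rate invf_div.
rewrite rateE rate_invE.
have [Hle|Hgt] := leP (entropy d) eps.
  rewrite /P (entropy_gap_event_eq0 hn) //.
  split=> [|delta /andP[delta0 _] _]; last exact: ltW.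
  by rewrite !mulr_ge0 ?expR_ge0 ?ler0n.
have H0 := lt_trans heps Hgt.
have c0 : 0 < entropy_rate d eps by rewrite (entropy_rate_gt0 hd0 hd1).
have S0 : 0 < S by rewrite ltr0n (ltn_trans _ (card_gt1_of_entropy_gt0 hd1 H0)).
have tail : P <= 2 * S * expR (- (n%:R * entropy_rate d eps)).
  apply: le_trans (iid_prob_entropy_gap_le hd0 hd1 hn eps _) _; first by rewrite heps.
  by rewrite ler_wpM2r ?expR_ge0 // ler_peMl ?ler1n // ltW.
split=> // delta /andP[delta0 _] n_ge; apply: le_trans tail _.
by apply: mul_expRN_le => //; exact: mulr_gt0.
Qed.
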